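(* Let $M(A)$ be a $2n$-dimensional real Bott manifold with Kähler structure (RBK manifold), with Bott matrix $A=[a_{ij}]$ and $P$-matrix $P_A$, and fix a partition $\{1,\dots,2n\}=\coprod_{k=1}^n\{j_k,j_{k+n}\}$ with $A^{j_k}=A^{j_{k+n}}$ for all $k$. For $1\le i<j\le 2n$ put $b_{ji}=a_{ij}$, and put $b_{ji}=0$ if $i\ge j$. Then $$w_2(M(A))=\pi^*\Big(\sum_{i=1}^{2n}\big(b_{j_1i}+b_{j_2i}+\dots+b_{j_ni}\big)x_i^2\Big),$$ i.e. the second Stiefel–Whitney class is represented by the polynomial $\sum_{i}\big(b_{j_1i}+\dots+b_{j_ni}\big)x_i^2\in\mathbb F_2[x_1,\dots,x_{2n}]$. Moreover, $M(A)$ admits a Spin-structure if and only if for every $i$ either $b_{j_1i}+b_{j_2i}+\dots+b_{j_ni}\equiv 0 \pmod 2$ or $x_i^2\in \mathrm{Id}_{P_A}$.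
   Context: Real Bott manifolds: let $A=[a_{ij}]$ be an $m\times m$ strictly upper triangular matrix with entries in $\{0,1\}$. For $i=1,\dots,m-1$ let $s_i$ be the Euclidean motion of $\mathbb R^m$ given by $s_i=(\mathrm{diag}[1,\dots,1,(-1)^{a_{i,i+1}},\dots,(-1)^{a_{i,m}}],\ \tfrac12 e_i)$ (the entry $(-1)^{a_{i,i+1}}$ in position $(i+1,i+1)$, translation part having $\tfrac12$ in the $i$-th coordinate and $0$ elsewhere), and $s_m=(I,\tfrac12 e_m)$. The group $\Gamma(A)=\langle s_1,\dots,s_m\rangle$ is a torsion-free crystallographic group whose translation subgroup $\mathbb Z^m$ is generated by $s_1^2,\dots,s_m^2$; $M(A)=\mathbb R^m/\Gamma(A)$ is the real Bott manifold, and there is an extension $0\to\mathbb Z^m\to\Gamma(A)\xrightarrow{\pi}\mathbb Z_2^m\to 1$. Identify $H^*(\mathbb Z_2^m;\mathbb F_2)=\mathbb F_2[x_1,\dots,x_m]$, with $x_1,\dots,x_m$ the basis of $H^1$ dual to the images of $s_1,\dots,s_m$, and let $\pi^*:H^*(\mathbb Z_2^m;\mathbb F_2)\to H^*(\Gamma(A);\mathbb F_2)=H^*(M(A);\mathbb F_2)$. $P$-matrix: $P_A=[p_{ij}]$ is the $m\times m$ matrix with $p_{ii}=1$, $p_{ij}=2$ if $i<j$ and $a_{ij}=1$, and $p_{ij}=0$ otherwise. Define $\alpha,\beta:\{0,1,2,3\}\to\mathbb F_2$ by $\alpha(0)=0,\alpha(1)=1,\alpha(2)=1,\alpha(3)=0$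 and $\beta(0)=0,\beta(1)=1,\beta(2)=0,\beta(3)=1$. For $j=1,\dots,m$ set $\alpha_j=\sum_{i}\alpha(p_{ij})x_i$, $\beta_j=\sum_i\beta(p_{ij})x_i$, $\theta_j=\alpha_j\beta_j$; the characteristic ideal is $\mathrm{Id}_{P_A}=\langle\theta_1,\dots,\theta_m\rangle\subseteq\mathbb F_2[x_1,\dots,x_m]$. (Thus $\alpha_j+\beta_j=\sum_{i<j}a_{ij}x_i$.) The total Stiefel–Whitney class of $M(A)$ is $w(M(A))=\pi^*\big(\prod_{j=1}^m(1+\alpha_j+\beta_j)\big)$, and $\ker\pi^*$ in degree $2$ is $\mathrm{Id}_{P_A}$ in degree 2. RBK manifold: $m=2n$ and there exist $n$ disjoint subsets $\{j_1,j_{n+1}\},\dots,\{j_n,j_{2n}\}$ with $\coprod_{k=1}^n\{j_k,j_{k+n}\}=\{1,\dots,2n\}$ and $A^{j_k}=A^{j_{k+n}}$ for all $k$, where $A^j$ denotes the $j$-th column of $A$ (equivalently, by Ishida's theorem, $M(A)$ admits a Kähler structure). $M(A)$ has a Spin-structure iff $w_2(M(A))=0$. *)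

From HB Require Import structures.
From mathcomp Require Import all_boot all_order all_algebra.
Set Implicit Arguments. Unset Strict Implicit. Unset Printing Implicit Defensive.
Import GRing.Theory.
Local Open Scope ring_scope.

Notation F2 := 'F_2.

(* Homogeneous polynomials of degree <= 2 in F_2[x_1,...,x_m].            *)
(* A linear form sum_i u_i x_i is a row vector u : 'rV[F2]_m.             *)
(* A quadratic form is represented by a matrix Q : 'M[F2]_m standing for  *)
(* the polynomial  sum_{i,j} Q i j * x_i * x_j  (variables commute).      *)
(* Two matrices represent the same polynomial iff their normal forms      *)
(* [coefficient of x_i x_j for i <= j] agree.                             *)
Definition qnorm m (Q : 'M[F2]_m) : 'M[F2]_m :=
  \matrix_(i, j) (if (i < j)%N then Q i j + Q j i
                  else if i == j then Q i i else 0).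

Definition qeq m (Q R : 'M[F2]_m) : Prop := qnorm Q = qnorm R.

Definition lmul m (u v : 'rV[F2]_m) : 'M[F2]_m := u^T *m v.

Definition xsq m (i : 'I_m) : 'M[F2]_m := delta_mx i i.

(* Truncation of F_2[x_1..x_m] to degree <= 2 (a quotient ring):          *)
(* elements (c, linear part, quadratic part) and truncated product.      *)
Definition trunc2 m := (F2 * 'rV[F2]_m * 'M[F2]_m)%type.
Definition tmul m (p q : trunc2 m) : trunc2 m :=
  let: (a, v, Q) := p in let: (b, w, R) := q in
  (a * b, a *: w + b *: v, a *: R + b *: Q + lmul v w).
Definition tone m : trunc2 m := (1, 0, 0).
Definition tprod m (s : seq (trunc2 m)) : trunc2 m := foldr (@tmul m) (tone m) s.
Definition tdeg2 m (p : trunc2 m) : 'M[F2]_m := p.2.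

Definition strictly_upper m (A : 'M[F2]_m) : Prop :=
  forall i j : 'I_m, (j <= i)%N -> A i j = 0.

Definition Pmat m (A : 'M[F2]_m) (i j : 'I_m) : nat :=
  if i == j then 1%N else if (i < j)%N && (A i j == 1) then 2%N else 0%N.

Definition alphaf (k : nat) : F2 :=
  match k with 1 => 1 | 2 => 1 | _ => 0 end.
Definition betaf (k : nat) : F2 :=
  match k with 1 => 1 | 3 => 1 | _ => 0 end.

Definition alpha_ m (A : 'M[F2]_m) (j : 'I_m) : 'rV[F2]_m :=
  \row_i alphaf (Pmat A i j).
Definition beta_ m (A : 'M[F2]_m) (j : 'I_m) : 'rV[F2]_m :=
  \row_i betaf (Pmat A i j).
Definition theta m (A : 'M[F2]_m) (j : 'I_m) : 'M[F2]_m :=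
  lmul (alpha_ A j) (beta_ A j).

(* Membership of a degree-2 homogeneous polynomial in Id_{P_A}:          *)
(* since Id_{P_A} is generated by the degree-2 forms theta_j, its         *)
(* degree-2 part is the F_2-span of theta_1..theta_m.                     *)
Definition in_IdP2 m (A : 'M[F2]_m) (Q : 'M[F2]_m) : Prop :=
  exists c : 'I_m -> F2, qeq Q (\sum_j c j *: theta A j).

(* Degree-2 part of prod_j (1 + alpha_j + beta_j) : the polynomial whose *)
(* image under pi^* is w_2(M(A)).                                         *)
Definition w2poly m (A : 'M[F2]_m) : 'M[F2]_m :=
  tdeg2 (tprod [seq ((1 : F2), alpha_ A j + beta_ A j, (0 : 'M[F2]_m)) | j <- enum 'I_m]).

(* "w_2(M(A)) = pi^*(f)" for a homogeneous degree-2 polynomial f:         *)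
(* pi^*(w2poly A) = pi^*(f) iff w2poly A - f lies in ker pi^* (degree 2), *)
(* which is Id_{P_A} in degree 2.                                         *)
Definition w2_represented_by m (A : 'M[F2]_m) (f : 'M[F2]_m) : Prop :=
  in_IdP2 A (w2poly A - f).

(* M(A) admits a Spin structure iff w_2(M(A)) = 0 = pi^*(0). *)
Definition has_spin m (A : 'M[F2]_m) : Prop := w2_represented_by A 0.

Definition bcoef m (A : 'M[F2]_m) (j i : 'I_m) : F2 :=
  if (i < j)%N then A i j else 0.

(* c_i = b_{j_1 i} + ... + b_{j_n i} for the partition given by jj,      *)
(* where j_k = jj (lshift n k), j_{k+n} = jj (rshift n k).                *)
Definition ccoef n (A : 'M[F2]_(n + n)) (jj : 'I_(n + n) -> 'I_(n + n))
  (i : 'I_(n + n)) : F2 :=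
  \sum_(k < n) bcoef A (jj (lshift n k)) i.

Definition w2_formula n (A : 'M[F2]_(n + n)) (jj : 'I_(n + n) -> 'I_(n + n))
  : 'M[F2]_(n + n) :=
  \sum_i ccoef A jj i *: xsq i.

(* Since alpha_j + beta_j is the j-th column l_j of A read as a linear form,
   w(M(A)) is the image of prod_j (1 + l_j), whose degree-2 part is the second
   elementary symmetric function of the l_j.  The Kaehler pairing makes the l_j
   coincide in pairs, so sum_j l_j = 0 and sum_j l_j^2 = 0: the mixed monomials
   x_a x_b cancel, and the coefficient of x_i^2 is C(2 N_i, 2) = N_i (mod 2),
   where N_i = c_i counts the pairs whose form involves x_i.  Modulo Id_{P_A},
   generated by theta_j = x_j (x_j + sum_{i<j} a_ij x_i), a diagonal form
   sum_i d_i x_i^2 vanishes iff d_j a_ij = 0 whenever i < j, which splits into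
   one condition on each x_i^2. *)

From HB Require Import structures.
From mathcomp Require Import all_boot all_order all_algebra.
From mathcomp Require Import zify ring.
Set Implicit Arguments. Unset Strict Implicit. Unset Printing Implicit Defensive.
Import GRing.Theory.
Local Open Scope ring_scope.

Lemma F2_cases (y : F2) : y = 0 \/ y = 1.
Proof. by case: y => [[|[|//]]] ?; [left | right]; apply/val_inj. Qed.

Lemma F2_addxx (y : F2) : y + y = 0.
Proof. exact/addrr_pchar2/pchar_Fp. Qed.

Lemma F2_lmod_addxx (V : lmodType F2) (v : V) : v + v = 0.
Proof. by rewrite -mulr2n -scaler_nat (pchar_Fp_0 (isT : prime 2)) scale0r. Qed.

Lemma F2_sum_count (T : Type) (s : seq T) (c : T -> F2) :
  \sum_(x <- s) c x = (count (fun x => c x == 1) s)%:R.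
Proof.
elim: s => [|x s IH]; first by rewrite big_nil.
by rewrite big_cons IH /= natrD; case: (F2_cases (c x)) => ->.
Qed.

Lemma bin2_double N : 'C(N.*2, 2) = (N + (N * N.-1).*2)%N.
Proof.
rewrite bin2 -[N.*2]mul2n -mulnA mul2n doubleK.
by case: N => [//|N] /=; rewrite -!muln2; nia.
Qed.

Lemma F2_bin2_double N : 'C(N.*2, 2)%:R = N%:R :> F2.
Proof. by rewrite bin2_double natrD -muln2 natrM (pchar_Fp_0 (isT : prime 2)) mulr0 addr0. Qed.

Section QuadraticForms.
Variable m : nat.
Implicit Types (Q R : 'M[F2]_m) (d : 'I_m -> F2).

Lemma qnormB Q R : qnorm (Q - R) = qnorm Q - qnorm R.
Proof.
apply/matrixP => i j; rewrite !mxE.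
by case: ltnP => _; [|case: eqP]; rewrite ?subr0 // opprD addrACA.
Qed.

Lemma qeq_symm_diag Q R :
  Q + Q^T = R + R^T -> (forall i, Q i i = R i i) -> qeq Q R.
Proof.
move=> /matrixP symm diag; apply/matrixP => i j; rewrite !mxE.
have := symm i j; rewrite !mxE => ->.
by case: ltnP => // _; case: eqP => // ->.
Qed.

Lemma diag_form_entry d (a b : 'I_m) :
  (\sum_i d i *: xsq i) a b = if a == b then d a else 0.
Proof.
rewrite summxE (bigD1 a) //= big1 => [|k /negbTE ka]; last by rewrite !mxE eq_sym ka mulr0.
by rewrite !mxE eqxx eq_sym addr0; case: eqP; rewrite ?mulr1 ?mulr0.
Qed.

Lemma trmx_diag_form d : (\sum_i d i *: xsq i)^T = \sum_i d i *: xsq i.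
Proof. by apply/matrixP => a b; rewrite mxE !diag_form_entry eq_sym; case: eqP => [->|]. Qed.

End QuadraticForms.

Section CharacteristicIdeal.
Variables (m : nat) (A : 'M[F2]_m).
Implicit Types (Q R : 'M[F2]_m) (d : 'I_m -> F2).

Lemma alphaf_Pmat_diag (a : 'I_m) : alphaf (Pmat A a a) = 1.
Proof. by rewrite /Pmat eqxx. Qed.

Lemma alphaf_Pmat_lt (a b : 'I_m) : (a < b)%N -> alphaf (Pmat A a b) = A a b.
Proof.
move=> lt_ab; rewrite /Pmat -val_eqE /= ltn_eqF // lt_ab.
by case: (F2_cases (A a b)) => ->.
Qed.

Lemma alphaf_Pmat_gt (a b : 'I_m) : (b < a)%N -> alphaf (Pmat A a b) = 0.
Proof. by move=> lt_ba; rewrite /Pmat -val_eqE /= gtn_eqF // ltnNge ltnW. Qed.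

Lemma theta_comb_entry (c : 'I_m -> F2) (a b : 'I_m) :
  (\sum_j c j *: theta A j) a b = c b * alphaf (Pmat A a b).
Proof.
rewrite summxE (bigD1 b) //= big1 => [|j /negbTE jb].
  by rewrite !mxE big_ord1 !mxE /Pmat eqxx mulr1 addr0.
rewrite !mxE big_ord1 !mxE /Pmat [b == j]eq_sym jb.
by rewrite [betaf _](_ : _ = 0) ?mulr0 //; case: ifP.
Qed.

Lemma in_IdP2_qeq Q R : qeq Q R -> in_IdP2 A Q <-> in_IdP2 A R.
Proof. by rewrite /in_IdP2 /qeq => ->. Qed.

Lemma qeq_in_IdP2_sub Q R : qeq Q R -> in_IdP2 A (Q - R).
Proof.
move=> eqQR; exists (fun=> 0); rewrite /qeq big1 => [|j _]; last exact: scale0r.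
by rewrite qnormB eqQR subrr -[in RHS](subrr 0) qnormB subrr.
Qed.

Lemma in_IdP2_diag_form d :
  in_IdP2 A (\sum_i d i *: xsq i) <-> forall a b : 'I_m, (a < b)%N -> d b * A a b = 0.
Proof.
split=> [[c /matrixP eqQ] a b lt_ab | dA].
  have ab : (a == b) = false by rewrite -val_eqE /= ltn_eqF.
  have := eqQ a b; have := eqQ b b; rewrite !mxE ltnn eqxx lt_ab.
  rewrite !diag_form_entry !theta_comb_entry [b == a]eq_sym ab eqxx.
  rewrite alphaf_Pmat_diag alphaf_Pmat_lt // alphaf_Pmat_gt // mulr1 mulr0 !addr0.
  by move=> -> <-.
exists d; apply/matrixP => a b; rewrite !mxE !diag_form_entry !theta_comb_entry.
have [lt_ab|] := ltnP a b.
  have ab : (a == b) = false by rewrite -val_eqE /= ltn_eqF.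
  rewrite [b == a]eq_sym ab alphaf_Pmat_lt // alphaf_Pmat_gt //.
  by rewrite dA // mulr0 !addr0.
by case: eqP => // -> _; rewrite eqxx alphaf_Pmat_diag mulr1.
Qed.

Lemma xsq_diag_form (i : 'I_m) : xsq i = \sum_k (k == i)%:R *: xsq k.
Proof.
by rewrite (bigD1 i) //= eqxx scale1r big1 ?addr0 // => k /negbTE ->; rewrite scale0r.
Qed.

Lemma in_IdP2_xsq (i : 'I_m) :
  in_IdP2 A (xsq i) <-> forall a : 'I_m, (a < i)%N -> A a i = 0.
Proof.
rewrite xsq_diag_form in_IdP2_diag_form; split=> [iA a /iA | iA a b lt_ab].
  by rewrite eqxx mul1r.
by case: (eqVneq b i) => [eb | _]; [subst b; rewrite iA ?mulr0 | rewrite mul0r].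
Qed.

Lemma in_IdP2_diag_formE d :
  in_IdP2 A (\sum_i d i *: xsq i) <-> forall i, d i = 0 \/ in_IdP2 A (xsq i).
Proof.
rewrite in_IdP2_diag_form; split=> [dA i | dxsq a b lt_ab].
  case: (F2_cases (d i)) => [|di1]; [by left | right].
  by apply/in_IdP2_xsq => a /dA; rewrite di1 mul1r.
by case: (dxsq b) => [-> | /in_IdP2_xsq ->]; rewrite ?mul0r ?mulr0.
Qed.

End CharacteristicIdeal.

(* The truncated product is commutative only up to [qeq], so rather than the
   degree-2 part itself we compute the two order-independent data that determine
   it up to [qeq]: its symmetrization and its diagonal. *)
Definition lin_prod m (T : Type) (f : T -> 'rV[F2]_m) (s : seq T) : trunc2 m :=
  tprod [seq ((1 : F2), f x, (0 : 'M[F2]_m)) | x <- s].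

Section LinearFormProducts.
Variables (m : nat) (T : Type) (f : T -> 'rV[F2]_m).

Lemma lin_prod_deg1 s : (lin_prod f s).1 = (1, \sum_(x <- s) f x).
Proof.
elim: s => [|x s IH]; first by rewrite big_nil.
rewrite big_cons; move: IH; rewrite /lin_prod /=.
by case: tprod => [[c w] Q] /= [-> ->]; rewrite mulr1 !scale1r addrC.
Qed.

Lemma lin_prod_cons x s :
  tdeg2 (lin_prod f (x :: s)) = tdeg2 (lin_prod f s) + (f x)^T *m \sum_(y <- s) f y.
Proof.
have := lin_prod_deg1 s; rewrite /lin_prod /tdeg2 /=.
by case: tprod => [[c w] Q] /= [-> ->]; rewrite !scale1r addr0.
Qed.

Lemma lin_prod_symm s (Q := tdeg2 (lin_prod f s)) (sigma := \sum_(x <- s) f x) :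
  Q + Q^T = sigma^T *m sigma + \sum_(x <- s) (f x)^T *m f x.
Proof.
rewrite {}/Q {}/sigma; elim: s => [|x s IH].
  by rewrite big_nil trmx0 mul0mx big_nil /= trmx0 !addr0.
rewrite lin_prod_cons !big_cons raddfD /= trmx_mul trmxK addrACA IH.
set v := f x; set sigma := \sum_(y <- s) f y; set D := \sum_(y <- s) _.
rewrite [(v + sigma)^T]raddfD /= mulmxDl !mulmxDr.
(* The square v^T v occurs twice on the right; cancelling it is the only place
   where characteristic 2 enters, what remains is an identity of abelian groups. *)
rewrite -[LHS]addr0 -(F2_lmod_addxx (v^T *m v)).
move: (v^T *m v) (v^T *m sigma) (sigma^T *m v) (sigma^T *m sigma) D => a b c d e.
by apply/matrixP => i j; rewrite !mxE; ring.
Qed.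

Lemma lin_prod_diag s (i : 'I_m) :
  tdeg2 (lin_prod f s) i i = 'C(count (fun x => f x ord0 i == 1) s, 2)%:R.
Proof.
elim: s => [|x s IH]; first by rewrite /= mxE.
rewrite lin_prod_cons mxE IH mxE big_ord1 !mxE summxE F2_sum_count /=.
case: (F2_cases (f x ord0 i)) => ->; first by rewrite mul0r addr0.
by rewrite mul1r add1n binS bin1 natrD.
Qed.

End LinearFormProducts.

Lemma alpha_add_beta m (A : 'M[F2]_m) (j : 'I_m) :
  strictly_upper A -> alpha_ A j + beta_ A j = (col j A)^T.
Proof.
move=> hA; apply/matrixP => z i; rewrite !mxE /Pmat.
case: (eqVneq i j) => [->|neq_ij]; first by rewrite hA //= F2_addxx.
case: ltnP => [_|le_ji]; last by rewrite hA //= addr0.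
by case: (F2_cases (A i j)) => ->; apply/val_inj.
Qed.

Lemma w2poly_col m (A : 'M[F2]_m) :
  strictly_upper A -> w2poly A = tdeg2 (lin_prod (fun j => (col j A)^T) (enum 'I_m)).
Proof.
move=> hA; rewrite /w2poly /lin_prod; congr (tdeg2 (tprod _)).
by apply: eq_map => j; rewrite alpha_add_beta.
Qed.

Section PairedIndices.
Variables (n : nat) (jj : 'I_(n + n) -> 'I_(n + n)).
Hypothesis jj_inj : injective jj.

Lemma big_paired (R : Type) (idx : R) (op : Monoid.com_law idx) (F : 'I_(n + n) -> R) :
  \big[op/idx]_(j <- enum 'I_(n + n)) F j =
  \big[op/idx]_(k < n) op (F (jj (lshift n k))) (F (jj (rshift n k))).
Proof. by rewrite big_enum /= (reindex_inj jj_inj) /= big_split_ord big_split. Qed.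

Lemma count_paired (p : pred 'I_(n + n)) :
  (forall k, p (jj (lshift n k)) = p (jj (rshift n k))) ->
  count p (enum 'I_(n + n)) = (count (fun k => p (jj (lshift n k))) (enum 'I_n)).*2.
Proof.
move=> p_paired; rewrite -!sum1_count big_mkcond big_paired.
rewrite [in RHS]big_mkcond big_enum /= -addnn -big_split /=.
by apply: eq_bigr => k _; rewrite p_paired.
Qed.

End PairedIndices.

Section RealBottKaehler.
Variables (n : nat) (A : 'M[F2]_(n + n)) (jj : 'I_(n + n) -> 'I_(n + n)).
Hypotheses (hA : strictly_upper A) (jj_inj : injective jj)
  (hcol : forall k : 'I_n, col (jj (lshift n k)) A = col (jj (rshift n k)) A).

Lemma sum_paired_cols (V : lmodType F2) (G : 'cV[F2]_(n + n) -> V) :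
  \sum_(j <- enum 'I_(n + n)) G (col j A) = 0.
Proof.
by rewrite (big_paired jj_inj); apply: big1 => k _; rewrite hcol; apply: F2_lmod_addxx.
Qed.

Lemma w2poly_qeq : qeq (w2poly A) (w2_formula A jj).
Proof.
apply: qeq_symm_diag => [|i].
  rewrite /w2_formula trmx_diag_form F2_lmod_addxx w2poly_col // lin_prod_symm.
  rewrite (sum_paired_cols (fun c => c^T)) (sum_paired_cols (fun c => c^T^T *m c^T)).
  by rewrite trmx0 mul0mx addr0.
rewrite w2poly_col // lin_prod_diag diag_form_entry eqxx.
rewrite (count_paired jj_inj) => [|k]; last by rewrite hcol.
rewrite F2_bin2_double -F2_sum_count /ccoef big_enum /=; apply: eq_bigr => k _.
by rewrite !mxE /bcoef; case: ltnP => // le_kji; rewrite hA.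
Qed.

End RealBottKaehler.

Theorem theorem3p1 (n : nat) (A : 'M['F_2]_(n + n))
  (hA : strictly_upper A)
  (jj : 'I_(n + n) -> 'I_(n + n)) (hjj : injective jj)
  (hcol : forall k : 'I_n, col (jj (lshift n k)) A = col (jj (rshift n k)) A) :
  w2_represented_by A (w2_formula A jj) /\
  (has_spin A <->
     forall i : 'I_(n + n), ccoef A jj i = 0 \/ in_IdP2 A (xsq i)).
Proof.
have w2E := w2poly_qeq hA hjj hcol.
split; first exact: qeq_in_IdP2_sub.
rewrite /has_spin /w2_represented_by subr0 (in_IdP2_qeq _ w2E).
exact: in_IdP2_diag_formE.
Qed.
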